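(* Let $G=(V,E)$ be a digraph. Then $G^{\top\bot}$ has the Hobby–McKenzie property if and only if $G$ has the Hobby–McKenzie property.
   Context: Digraphs are finite and loopless. $G^\top$ is the digraph on $V\cup\{\top\}$ with edges $E\cup\{(v,\top):v\in V\}$; $G^\bot$ is the digraph on $V\cup\{\bot\}$ with edges $E\cup\{(\bot,v):v\in V\}$; $G^{\top\bot}=(G^\top)^\bot$. A polymorphism is a map $f:V^k\to V$ with $(f(a_1,\dots,a_k),f(b_1,\dots,b_k))\in E$ whenever all $(a_i,b_i)\in E$. A digraph has the Hobby–McKenzie property if there are $n\ge0$ and idempotent ternary polymorphisms $d_0,\dots,d_n,p,e_0,\dots,e_n$ satisfying, for all vertices: $x=d_0(x,y,z)$, $e_n(x,y,z)=z$; $d_i(x,y,y)=d_{i+1}(x,y,y)$ and $e_i(x,y,y)=e_{i+1}(x,y,y)$ for even $i<n$; $d_i(x,x,y)=d_{i+1}(x,x,y)$ and $e_i(x,x,y)=e_{i+1}(x,x,y)$ for odd $i<n$; $d_n(x,y,y)=p(x,y,y)$ and $p(x,x,y)=e_0(x,x,y)$; $d_i(x,y,x)=d_{i+1}(x,y,x)$ for odd $i<n$ and $e_j(x,y,x)=e_{j+1}(x,y,x)$ for even $j<n$. *)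

From mathcomp Require Import all_boot.
Set Implicit Arguments. Unset Strict Implicit. Unset Printing Implicit Defensive.

(* G^top : vertices option V, None = top; edges E on Some plus (v, top). *)
Definition top_rel (V : Type) (E : rel V) : rel (option V) :=
  fun a b => match a, b with
             | Some x, Some y => E x y
             | Some _, None => true
             | _, _ => false
             end.

(* G^bot : vertices option V, None = bot; edges E on Some plus (bot, v). *)
Definition bot_rel (V : Type) (E : rel V) : rel (option V) :=
  fun a b => match a, b with
             | Some x, Some y => E x y
             | None, Some _ => true
             | _, _ => false
             end.

Definition topbot_rel (V : Type) (E : rel V) : rel (option (option V)) :=
  bot_rel (top_rel E).

Definition polymorphism3 (V : Type) (E : rel V) (f : V -> V -> V -> V) : Prop :=
  forall a1 a2 a3 b1 b2 b3, E a1 b1 -> E a2 b2 -> E a3 b3 ->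
    E (f a1 a2 a3) (f b1 b2 b3).

Definition idempotent3 (V : Type) (f : V -> V -> V -> V) : Prop :=
  forall x, f x x x = x.

Definition idem_pol3 (V : Type) (E : rel V) (f : V -> V -> V -> V) : Prop :=
  polymorphism3 E f /\ idempotent3 f.

(* Hobby–McKenzie property; d i and e i are only relevant for i <= n. *)
Definition hobby_mckenzie (V : Type) (E : rel V) : Prop :=
  exists (n : nat) (d e : nat -> V -> V -> V -> V) (p : V -> V -> V -> V),
    (forall i, i <= n -> idem_pol3 E (d i)) /\
    (forall i, i <= n -> idem_pol3 E (e i)) /\
    idem_pol3 E p /\
    (forall x y z, d 0 x y z = x) /\
    (forall x y z, e n x y z = z) /\
    (forall i, i < n -> ~~ odd i -> forall x y,
        d i x y y = d i.+1 x y y /\ e i x y y = e i.+1 x y y) /\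
    (forall i, i < n -> odd i -> forall x y,
        d i x x y = d i.+1 x x y /\ e i x x y = e i.+1 x x y) /\
    (forall x y, d n x y y = p x y y) /\
    (forall x y, p x x y = e 0 x x y) /\
    (forall i, i < n -> odd i -> forall x y, d i x y x = d i.+1 x y x) /\
    (forall j, j < n -> ~~ odd j -> forall x y, e j x y x = e j.+1 x y x).

(* The vertices of G are exactly the vertices of G^{top bot} with an edge from
   bot and an edge to top; idempotent polymorphisms preserve this set, so
   they restrict to G and the identities restrict with them.  Conversely, an
   operation of G extends to G^{top bot} by returning bot when some argument
   is bot and top otherwise.  This extension preserves polymorphisms and every
   identity of the chain except the two projection identities at its ends,
   which are repaired by inserting one extra term at each end of the chain. *)

From mathcomp Require Import all_boot zify.
Set Implicit Arguments. Unset Strict Implicit. Unset Printing Implicit Defensive.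

Lemma idem_pol3_proj1 (T : Type) (H : rel T) : idem_pol3 H (fun x _ _ => x).
Proof. by split=> [? ? ? ? ? ? ? ? ?|]. Qed.

Lemma idem_pol3_proj3 (T : Type) (H : rel T) : idem_pol3 H (fun _ _ z => z).
Proof. by split=> [? ? ? ? ? ? ? ? ?|]. Qed.

Section Pullback.
Variables (V W : Type) (E : rel V) (H : rel W) (i : V -> W) (r : W -> option V).
Hypotheses (iK : pcancel i r) (rel_i : forall a b, H (i a) (i b) = E a b).
Hypothesis idem_pol3_closed : forall F, idem_pol3 H F ->
  forall a b c, exists v, F (i a) (i b) (i c) = i v.

Definition pullback3 (F : W -> W -> W -> W) (a b c : V) : V :=
  odflt a (r (F (i a) (i b) (i c))).

Lemma pullback3E F a b c :
  idem_pol3 H F -> i (pullback3 F a b c) = F (i a) (i b) (i c).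
Proof. by move=> /idem_pol3_closed/(_ a b c)[v Fv]; rewrite /pullback3 Fv iK. Qed.

Lemma idem_pol3_pullback F : idem_pol3 H F -> idem_pol3 E (pullback3 F).
Proof.
move=> F_ip; split=> [a1 a2 a3 b1 b2 b3 e1 e2 e3 | a].
  by rewrite -rel_i !pullback3E //; apply: F_ip.1; rewrite rel_i.
by rewrite /pullback3 F_ip.2 iK.
Qed.

Lemma hobby_mckenzie_pullback : hobby_mckenzie H -> hobby_mckenzie E.
Proof.
case=> n [d [e [p [d_ip [e_ip [p_ip [d0 [en [ev_steps [odd_steps [dp [pe [d_odd e_ev]]]]]]]]]]]]].
exists n, (fun k => pullback3 (d k)), (fun k => pullback3 (e k)), (pullback3 p).
split=> [k /d_ip/idem_pol3_pullback // |]; split=> [k /e_ip/idem_pol3_pullback // |].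
split; first exact: idem_pol3_pullback.
rewrite /pullback3.
split=> [x y z | ]; first by rewrite d0 iK.
split=> [x y z | ]; first by rewrite en iK.
split=> [k kn k_ev x y | ]; first by case: (ev_steps k kn k_ev (i x) (i y)) => -> ->.
split=> [k kn k_odd x y | ]; first by case: (odd_steps k kn k_odd (i x) (i y)) => -> ->.
split=> [x y | ]; first by rewrite dp.
split=> [x y | ]; first by rewrite pe.
by split=> [k kn k_odd x y | k kn k_ev x y]; [rewrite d_odd | rewrite e_ev].
Qed.

End Pullback.

Section TopBot.
Variables (V : finType) (E : rel V).

Local Notation W := (option (option V)).
Local Notation R := (topbot_rel E).
Local Notation bot := (None : W).
Local Notation top := (Some None : W).
Local Notation vtx v := (Some (Some v)).

Variant topbot_edge_spec : W -> W -> Prop :=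
  | TopBotEdgeBotTop : topbot_edge_spec bot top
  | TopBotEdgeBotVtx v : topbot_edge_spec bot (vtx v)
  | TopBotEdgeVtxTop v : topbot_edge_spec (vtx v) top
  | TopBotEdgeVtx a b of E a b : topbot_edge_spec (vtx a) (vtx b).

Lemma topbot_edgeP u w : R u w -> topbot_edge_spec u w.
Proof. by case: u w => [[a|]|] [[b|]|] //= Eab; constructor. Qed.

Lemma idem_pol3_topbot_vtx F :
  idem_pol3 R F -> forall a b c, exists v, F (vtx a) (vtx b) (vtx c) = vtx v.
Proof.
case=> F_pol F_idem a b c.
have := F_pol bot bot bot (vtx a) (vtx b) (vtx c) isT isT isT.
have := F_pol (vtx a) (vtx b) (vtx c) top top top isT isT isT.
by rewrite !F_idem; case: (F _ _ _) => [[v|]|] // _ _; exists v.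
Qed.

Lemma hobby_mckenzie_of_topbot_rel : hobby_mckenzie R -> hobby_mckenzie E.
Proof.
apply: (@hobby_mckenzie_pullback _ _ _ _ (fun v => vtx v)
          (fun w => if w is vtx v then Some v else None)) => //.
exact: idem_pol3_topbot_vtx.
Qed.

(* bot has an edge to every vertex but bot, and every vertex of G has an edge
   to top, so this value never breaks an edge. *)
Definition default3 (x y z : W) : W :=
  if (x == bot) || (y == bot) || (z == bot) then bot else top.

Definition extend_by (F : W -> W -> W -> W) (f : V -> V -> V -> V) x y z : W :=
  match x, y, z with
  | vtx a, vtx b, vtx c => vtx (f a b c)
  | _, _, _ => F x y z
  end.

Local Notation extend := (extend_by default3).

Definition dpad :=
  extend_by (fun x y z => if y == z then x else default3 x y z) (fun a _ _ => a).

Definition epad_even :=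
  extend_by (fun x y z => if x == y then z else default3 x y z) (fun _ _ c => c).

Definition epad_odd :=
  extend_by (fun x y z => if (y == z) || (x == z) then z else default3 x y z)
            (fun _ _ c => c).

Ltac topbot_edges :=
  move=> ? ? ? ? ? ? /topbot_edgeP[|?|?|? ? ?] /topbot_edgeP[|?|?|? ? ?]
                     /topbot_edgeP[|?|?|? ? ?];
  rewrite /= /default3 /=; repeat case: eqP => //=; try done.

Lemma idem_pol3_extend f : idem_pol3 E f -> idem_pol3 R (extend f).
Proof.
case=> f_pol f_idem; split=> [|[[a|]|]] //=; last by rewrite f_idem.
by topbot_edges; apply: f_pol.
Qed.

Lemma idem_pol3_dpad : idem_pol3 R dpad.
Proof. by split=> [|[[a|]|]]; first topbot_edges. Qed.

Lemma idem_pol3_epad_even : idem_pol3 R epad_even.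
Proof. by split=> [|[[a|]|]]; first topbot_edges. Qed.

Lemma idem_pol3_epad_odd : idem_pol3 R epad_odd.
Proof. by split=> [|[[a|]|]]; first topbot_edges. Qed.

Lemma extend_by_xyy F f g x y : (forall a b, f a b b = g a b b) ->
  extend_by F f x y y = extend_by F g x y y.
Proof. by move=> fg; case: x y => [[a|]|] [[b|]|] //=; rewrite fg. Qed.

Lemma extend_by_xxy F f g x y : (forall a b, f a a b = g a a b) ->
  extend_by F f x x y = extend_by F g x x y.
Proof. by move=> fg; case: x y => [[a|]|] [[b|]|] //=; rewrite fg. Qed.

Lemma extend_by_xyx F f g x y : (forall a b, f a b a = g a b a) ->
  extend_by F f x y x = extend_by F g x y x.
Proof. by move=> fg; case: x y => [[a|]|] [[b|]|] //=; rewrite fg. Qed.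

Ltac pad_cases :=
  move=> [[?|]|] [[?|]|]; rewrite /= /default3 /= ?eqxx //; repeat case: eqP => //=.

Lemma dpad_xyy x y : dpad x y y = x.
Proof. by move: x y; pad_cases. Qed.

Lemma dpad_xxy f x y : (forall a b c, f a b c = a) -> dpad x x y = extend f x x y.
Proof. by move=> f1; move: x y; pad_cases; rewrite f1. Qed.

Lemma dpad_xyx f x y : (forall a b c, f a b c = a) -> dpad x y x = extend f x y x.
Proof. by move=> f1; move: x y; pad_cases; rewrite f1. Qed.

Lemma epad_even_xyy f x y :
  (forall a b c, f a b c = c) -> epad_even x y y = extend f x y y.
Proof. by move=> f3; move: x y; pad_cases; rewrite f3. Qed.

Lemma epad_even_xyx f x y :
  (forall a b c, f a b c = c) -> epad_even x y x = extend f x y x.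
Proof. by move=> f3; move: x y; pad_cases; rewrite f3. Qed.

Lemma epad_even_xxy x y : epad_even x x y = y.
Proof. by move: x y; pad_cases. Qed.

Lemma epad_odd_xxy f x y :
  (forall a b c, f a b c = c) -> epad_odd x x y = extend f x x y.
Proof. by move=> f3; move: x y; pad_cases; rewrite f3. Qed.

Lemma epad_odd_xyy x y : epad_odd x y y = y.
Proof. by move: x y; pad_cases. Qed.

Lemma epad_odd_xyx x y : epad_odd x y x = x.
Proof. by move: x y; pad_cases. Qed.

Section Extension.
Variables (n : nat) (d e : nat -> V -> V -> V -> V) (p : V -> V -> V -> V).
Hypotheses (d_ip : forall k, k <= n -> idem_pol3 E (d k))
           (e_ip : forall k, k <= n -> idem_pol3 E (e k)) (p_ip : idem_pol3 E p).
Hypotheses (d0 : forall x y z, d 0 x y z = x) (en : forall x y z, e n x y z = z).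
Hypothesis ev_steps : forall k, k < n -> ~~ odd k -> forall x y,
  d k x y y = d k.+1 x y y /\ e k x y y = e k.+1 x y y.
Hypothesis odd_steps : forall k, k < n -> odd k -> forall x y,
  d k x x y = d k.+1 x x y /\ e k x x y = e k.+1 x x y.
Hypotheses (dp : forall x y, d n x y y = p x y y) (pe : forall x y, p x x y = e 0 x x y).
Hypothesis d_odd : forall k, k < n -> odd k -> forall x y, d k x y x = d k.+1 x y x.
Hypothesis e_ev : forall k, k < n -> ~~ odd k -> forall x y, e k x y x = e k.+1 x y x.

(* The chains (proj1, dpad, d 0, ..., d n) and (e 0, ..., e n, epad, proj3):
   [extend (d 0)] and [extend (e n)] are no longer projections. *)
Definition d_ext k : W -> W -> W -> W :=
  match k with 0 => fun x _ _ => x | 1 => dpad | k.+2 => extend (d k) end.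

Definition epad := if odd n then epad_odd else epad_even.

Definition e_ext k : W -> W -> W -> W :=
  if k <= n then extend (e k) else if k == n.+1 then epad else fun _ _ z => z.

Lemma e_ext_le k : k <= n -> e_ext k = extend (e k).
Proof. by rewrite /e_ext => ->. Qed.

Lemma e_ext_succ : e_ext n.+1 = epad.
Proof. by rewrite /e_ext ltnn eqxx. Qed.

Lemma e_ext_succ2 : e_ext n.+2 = fun _ _ z => z.
Proof. by rewrite /e_ext ltnNge leqnSn /= eqSS (gtn_eqF (ltnSn n)). Qed.

Lemma idem_pol3_d_ext k : k <= n.+2 -> idem_pol3 R (d_ext k).
Proof.
case: k => [|[|k]] kn; [exact: idem_pol3_proj1 | exact: idem_pol3_dpad |].
exact/idem_pol3_extend/d_ip.
Qed.

Lemma idem_pol3_e_ext k : k <= n.+2 -> idem_pol3 R (e_ext k).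
Proof.
case: (leqP k n) => [kn _ | nk kn].
  by rewrite e_ext_le //; exact/idem_pol3_extend/e_ip.
have [->|->] : k = n.+1 \/ k = n.+2 by lia.
- rewrite e_ext_succ /epad.
  by case: odd; [exact: idem_pol3_epad_odd | exact: idem_pol3_epad_even].
- by rewrite e_ext_succ2; exact: idem_pol3_proj3.
Qed.

Lemma d_ext_xyy k : k < n.+2 -> ~~ odd k -> forall x y, d_ext k x y y = d_ext k.+1 x y y.
Proof.
case: k => [|[|k]] //= kn; first by move=> _ x y; rewrite dpad_xyy.
rewrite negbK => k_ev x y; apply: extend_by_xyy => a b.
by case: (ev_steps (_ : k < n) k_ev a b); first lia.
Qed.

Lemma d_ext_xxy k : k < n.+2 -> odd k -> forall x y, d_ext k x x y = d_ext k.+1 x x y.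
Proof.
case: k => [|[|k]] //= kn; first by move=> _ x y; rewrite (dpad_xxy x y d0).
rewrite negbK => k_odd x y; apply: extend_by_xxy => a b.
by case: (odd_steps (_ : k < n) k_odd a b); first lia.
Qed.

Lemma d_ext_xyx k : k < n.+2 -> odd k -> forall x y, d_ext k x y x = d_ext k.+1 x y x.
Proof.
case: k => [|[|k]] //= kn; first by move=> _ x y; rewrite (dpad_xyx x y d0).
rewrite negbK => k_odd x y; apply: extend_by_xyx => a b.
by apply: d_odd k_odd a b; lia.
Qed.

Lemma e_ext_xyy k : k < n.+2 -> ~~ odd k -> forall x y, e_ext k x y y = e_ext k.+1 x y y.
Proof.
move=> kn k_ev x y; case: (ltngtP k n) => [k_lt | k_gt | k_eq].
- rewrite !e_ext_le ?(ltnW k_lt) //; apply: extend_by_xyy => a b.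
  by case: (ev_steps k_lt k_ev a b).
- have k_eq : k = n.+1 by lia.
  rewrite k_eq /= negbK in k_ev *.
  by rewrite e_ext_succ e_ext_succ2 /epad k_ev epad_odd_xyy.
- rewrite k_eq in k_ev *.
  by rewrite e_ext_le // e_ext_succ /epad (negbTE k_ev) (epad_even_xyy x y en).
Qed.

Lemma e_ext_xxy k : k < n.+2 -> odd k -> forall x y, e_ext k x x y = e_ext k.+1 x x y.
Proof.
move=> kn k_odd x y; case: (ltngtP k n) => [k_lt | k_gt | k_eq].
- rewrite !e_ext_le ?(ltnW k_lt) //; apply: extend_by_xxy => a b.
  by case: (odd_steps k_lt k_odd a b).
- have k_eq : k = n.+1 by lia.
  rewrite k_eq /= in k_odd *.
  by rewrite e_ext_succ e_ext_succ2 /epad (negbTE k_odd) epad_even_xxy.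
- rewrite k_eq in k_odd *.
  by rewrite e_ext_le // e_ext_succ /epad k_odd (epad_odd_xxy x y en).
Qed.

Lemma e_ext_xyx k : k < n.+2 -> ~~ odd k -> forall x y, e_ext k x y x = e_ext k.+1 x y x.
Proof.
move=> kn k_ev x y; case: (ltngtP k n) => [k_lt | k_gt | k_eq].
- by rewrite !e_ext_le ?(ltnW k_lt) //; apply: extend_by_xyx => a b; apply: e_ev.
- have k_eq : k = n.+1 by lia.
  rewrite k_eq /= negbK in k_ev *.
  by rewrite e_ext_succ e_ext_succ2 /epad k_ev epad_odd_xyx.
- rewrite k_eq in k_ev *.
  by rewrite e_ext_le // e_ext_succ /epad (negbTE k_ev) (epad_even_xyx x y en).
Qed.

Lemma hobby_mckenzie_extension : hobby_mckenzie R.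
Proof.
exists n.+2, d_ext, e_ext, (extend p).
split; first exact: idem_pol3_d_ext.
split; first exact: idem_pol3_e_ext.
split; first exact: idem_pol3_extend.
split; first by [].
split; first by rewrite e_ext_succ2.
split; first by move=> k kn k_ev x y; rewrite d_ext_xyy // e_ext_xyy.
split; first by move=> k kn k_odd x y; rewrite d_ext_xxy // e_ext_xxy.
split; first by move=> x y; apply: extend_by_xyy dp.
split; first by move=> x y; rewrite e_ext_le //; apply: extend_by_xxy pe.
by split; [exact: d_ext_xyx | exact: e_ext_xyx].
Qed.

End Extension.

Lemma hobby_mckenzie_topbot_rel : hobby_mckenzie E -> hobby_mckenzie R.
Proof.
by case=> n [d [e [p [? [? [? [? [? [? [? [? [? [? ?]]]]]]]]]]]]];
  apply: (@hobby_mckenzie_extension n d e p).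
Qed.

End TopBot.

Theorem theorem5p5 (V : finType) (E : rel V) (loopless : irreflexive E) :
  hobby_mckenzie (topbot_rel E) <-> hobby_mckenzie E.
Proof.
by split; [exact: hobby_mckenzie_of_topbot_rel | exact: hobby_mckenzie_topbot_rel].
Qed.
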